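(* Let $\Lambda,\Gamma\in\mathcal D_n^+$ and let $f,g:\mathcal D_n^+\to\mathcal D_n^+$ be stable mappings. Then the mappings $\Delta\mapsto\Lambda f(\Gamma\Delta)$, $\Delta\mapsto f(\Delta)^{-1}$, $f\circ g$ and $f+g$ are all stable mappings.
   Context: $\mathcal D_n^+$ is the set of $n\times n$ diagonal matrices with positive diagonal entries; $d_s(\Delta,\Delta')=\max_i\frac{|\Delta_i-\Delta'_i|}{\sqrt{\Delta_i\Delta'_i}}$. A mapping $f:\mathcal D_n^+\to\mathcal D_n^+$ is stable if $d_s(f(\Delta),f(\Delta'))\le d_s(\Delta,\Delta')$ for all $\Delta,\Delta'\in\mathcal D_n^+$. *)

From mathcomp Require Import all_boot all_order all_algebra.
From mathcomp Require Import reals.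
Set Implicit Arguments. Unset Strict Implicit. Unset Printing Implicit Defensive.
Import Order.TTheory GRing.Theory Num.Theory.
Local Open Scope ring_scope.

Definition posdiag (R : realType) (n : nat) (D : 'M[R]_n) : bool :=
  is_diag_mx D && [forall i, 0 < D i i].

Definition dS (R : realType) (n : nat) (D D' : 'M[R]_n) : R :=
  \big[Num.max/0]_(i < n) (`|D i i - D' i i| / Num.sqrt (D i i * D' i i)).

(* f is a stable mapping D_n^+ -> D_n^+ (f is a total function on matrices,
   only its behaviour on D_n^+ matters). *)
Definition stable_map (R : realType) (n : nat) (f : 'M[R]_n -> 'M[R]_n) : Prop :=
  (forall D, posdiag D -> posdiag (f D)) /\
  (forall D D', posdiag D -> posdiag D' -> dS (f D) (f D') <= dS D D').

(* Each diagonal coordinate of d_s is the scale-free distance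
   |a - b| / sqrt(a b) between positive reals.  It is invariant under a common
   positive factor and under inversion, and it is quasi-convex under addition,
   because sqrt(a b) + sqrt(c d) <= sqrt((a + c)(b + d)) (Cauchy-Schwarz).
   So multiplication by an element of D_n^+ and inversion are stable maps,
   stable maps are closed under sums, and trivially under composition. *)

From mathcomp Require Import all_boot all_order all_algebra.
From mathcomp Require Import reals.
From mathcomp Require Import ring lra.
Import Order.TTheory GRing.Theory Num.Theory.
Local Open Scope ring_scope.

Section RelDist.
Context {R : rcfType}.
Implicit Types a b c d l : R.

Definition reldist a b := `|a - b| / Num.sqrt (a * b).

Lemma reldist_ge0 a b : 0 <= reldist a b.
Proof. by rewrite divr_ge0 ?sqrtr_ge0. Qed.

Lemma reldistZ l a b : 0 < l -> reldist (l * a) (l * b) = reldist a b.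
Proof.
move=> l0; rewrite /reldist -mulrBr normrM (gtr0_norm l0).
rewrite mulrACA -expr2 (sqrtrM _ (sqr_ge0 l)) sqrtr_sqr (gtr0_norm l0).
by rewrite invfM mulrACA divff ?gt_eqF // mul1r.
Qed.

Lemma reldistV a b : 0 < a -> 0 < b -> reldist a^-1 b^-1 = reldist a b.
Proof.
move=> a0 b0; have ab0 : 0 < a * b by rewrite mulr_gt0.
rewrite /reldist; have -> : a^-1 - b^-1 = (b - a) / (a * b).
  by field; rewrite !gt_eqF.
rewrite -invfM sqrtrV ?ltW // invrK normrM distrC normfV (gtr0_norm ab0).
have s0 : 0 < Num.sqrt (a * b) by rewrite sqrtr_gt0.
set s := Num.sqrt (a * b) in s0 *.
have -> : a * b = s ^+ 2 by rewrite sqr_sqrtr // ltW.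
by field; rewrite gt_eqF.
Qed.

Lemma lerD_sqrtrM a b c d : 0 <= a -> 0 <= b -> 0 <= c -> 0 <= d ->
  Num.sqrt (a * b) + Num.sqrt (c * d) <= Num.sqrt ((a + c) * (b + d)).
Proof.
move=> a0 b0 c0 d0.
have cross : Num.sqrt (a * b) * Num.sqrt (c * d)
             = Num.sqrt (a * d) * Num.sqrt (b * c).
  by rewrite -!sqrtrM ?mulr_ge0 //; congr Num.sqrt; ring.
rewrite -(ler_pXn2r (isT : (0 < 2)%N)) ?nnegrE ?addr_ge0 ?sqrtr_ge0 //.
rewrite sqr_sqrtr ?mulr_ge0 ?addr_ge0 // sqrrD cross.
have := sqr_ge0 (Num.sqrt (a * d) - Num.sqrt (b * c)).
rewrite sqrrB !sqr_sqrtr ?mulr_ge0 //.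
lra.
Qed.

Lemma reldistD {a b c d} : 0 < a -> 0 < b -> 0 < c -> 0 < d ->
  reldist (a + c) (b + d) <= Num.max (reldist a b) (reldist c d).
Proof.
move=> a0 b0 c0 d0; set t := Num.max _ _.
have s0 : 0 < Num.sqrt (a * b) by rewrite sqrtr_gt0 mulr_gt0.
have u0 : 0 < Num.sqrt (c * d) by rewrite sqrtr_gt0 mulr_gt0.
have w0 : 0 < Num.sqrt ((a + c) * (b + d)) by rewrite sqrtr_gt0 mulr_gt0 ?addr_gt0.
have t0 : 0 <= t by rewrite le_max reldist_ge0.
have /andP[tab tcd] : (reldist a b <= t) && (reldist c d <= t) by rewrite -ge_max.
move: tab tcd; rewrite /reldist !ler_pdivrMr // => tab tcd.
have -> : a + c - (b + d) = (a - b) + (c - d) by rewrite addrACA opprD.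
apply: (le_trans (ler_normD _ _)); apply: (le_trans (lerD tab tcd)).
by rewrite -mulrDr ler_wpM2l // lerD_sqrtrM ?ltW.
Qed.

End RelDist.

Lemma mulmx_diagl (R : pzRingType) n (A X : 'M[R]_n) i j :
  is_diag_mx A -> (A *m X) i j = A i i * X i j.
Proof.
move=> /is_diag_mxP Adiag; rewrite mxE (bigD1 i) //= big1 ?addr0 // => k ki.
by rewrite Adiag ?mul0r // eq_sym.
Qed.

(* Off the diagonal, [map_mx GRing.inv] keeps the zeros because [0^-1 = 0]. *)
Lemma invmx_diag (F : fieldType) n (D : 'M[F]_n) :
  is_diag_mx D -> (forall i, D i i != 0) -> invmx D = map_mx GRing.inv D.
Proof.
move=> Ddiag Dii; have /is_diag_mxP D0 := Ddiag.
have DV : D *m map_mx GRing.inv D = 1%:M.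
  apply/matrixP => i j; rewrite mulmx_diagl // !mxE.
  by case: eqVneq => [<-|ij]; [exact: divff | rewrite (D0 i j ij) invr0 mulr0].
have [Dunit _] := mulmx1_unit DV.
by rewrite -[map_mx _ _]mul1mx -(mulVmx Dunit) -mulmxA DV mulmx1.
Qed.

Section PositiveDiagonal.
Context {R : realType} {n : nat}.
Implicit Types A B C D L : 'M[R]_n.

Lemma posdiagP D : reflect (is_diag_mx D /\ forall i, 0 < D i i) (posdiag D).
Proof. by apply: (iffP andP) => -[Ddiag /forallP Dpos]. Qed.

Lemma posdiag_mul A B : posdiag A -> posdiag B -> posdiag (A *m B).
Proof.
move=> /posdiagP[Adiag Apos] /posdiagP[/is_diag_mxP B0 Bpos].
apply/posdiagP; split=> [|i]; last by rewrite mulmx_diagl // mulr_gt0.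
by apply/is_diag_mxP => i j ij; rewrite mulmx_diagl // B0 // mulr0.
Qed.

Lemma posdiag_add A B : posdiag A -> posdiag B -> posdiag (A + B).
Proof.
move=> /posdiagP[/is_diag_mxP A0 Apos] /posdiagP[/is_diag_mxP B0 Bpos].
apply/posdiagP; split=> [|i]; last by rewrite mxE addr_gt0.
by apply/is_diag_mxP => i j ij; rewrite mxE A0 // B0 // addr0.
Qed.

Lemma invmx_posdiag D : posdiag D -> invmx D = map_mx GRing.inv D.
Proof. by move=> /posdiagP[Ddiag Dpos]; apply: invmx_diag => // i; rewrite gt_eqF. Qed.

Lemma posdiag_inv D : posdiag D -> posdiag (invmx D).
Proof.
move=> PD; rewrite invmx_posdiag //; move/posdiagP: PD => [/is_diag_mxP D0 Dpos].
apply/posdiagP; split=> [|i]; last by rewrite mxE invr_gt0.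
by apply/is_diag_mxP => i j ij; rewrite mxE D0 // invr0.
Qed.

Lemma dSE A B : dS A B = \big[Num.max/0]_i reldist (A i i) (B i i).
Proof. by []. Qed.

Lemma dS_ge0 A B : 0 <= dS A B.
Proof. exact: bigmax_ge_id. Qed.

Lemma reldist_le_dS A B i : reldist (A i i) (B i i) <= dS A B.
Proof. by rewrite dSE; apply: le_bigmax. Qed.

Lemma dS_le A B t :
  0 <= t -> (forall i, reldist (A i i) (B i i) <= t) -> dS A B <= t.
Proof. by move=> t0 le_t; rewrite dSE; apply: bigmax_le. Qed.

Lemma dS_mull L A B : posdiag L -> dS (L *m A) (L *m B) = dS A B.
Proof.
move=> /posdiagP[Ldiag Lpos]; rewrite !dSE; apply: eq_bigr => i _.
by rewrite !mulmx_diagl // reldistZ.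
Qed.

Lemma dS_invmx A B : posdiag A -> posdiag B -> dS (invmx A) (invmx B) = dS A B.
Proof.
move=> PA PB; rewrite !invmx_posdiag // !dSE; apply: eq_bigr => i _.
by rewrite !mxE reldistV //; [case/posdiagP: PA | case/posdiagP: PB].
Qed.

Lemma dS_add {A B C D} : posdiag A -> posdiag B -> posdiag C -> posdiag D ->
  dS (A + C) (B + D) <= Num.max (dS A B) (dS C D).
Proof.
move=> /posdiagP[_ Apos] /posdiagP[_ Bpos] /posdiagP[_ Cpos] /posdiagP[_ Dpos].
apply: dS_le => [|i]; first by rewrite le_max dS_ge0.
rewrite !mxE; apply: le_trans (reldistD (Apos i) (Bpos i) (Cpos i) (Dpos i)) _.
by rewrite le_max2 ?reldist_le_dS.
Qed.

End PositiveDiagonal.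

Section StableMaps.
Context {R : realType} {n : nat}.
Implicit Types f g : 'M[R]_n -> 'M[R]_n.

Lemma stable_map_comp {f g} :
  stable_map f -> stable_map g -> stable_map (fun D => f (g D)).
Proof.
move=> [fP fS] [gP gS]; split=> [D PD|D D' PD PD']; first by apply/fP/gP.
exact: le_trans (fS _ _ (gP _ PD) (gP _ PD')) (gS _ _ PD PD').
Qed.

Lemma stable_map_mull {L : 'M[R]_n} :
  posdiag L -> stable_map (mulmx L : 'M_n -> 'M_n).
Proof.
move=> PL; split=> [D PD|D D' _ _]; first exact: posdiag_mul.
by rewrite dS_mull.
Qed.

Lemma stable_map_invmx : stable_map (@invmx R n).
Proof.
split=> [D PD|D D' PD PD']; first exact: posdiag_inv.
by rewrite dS_invmx.
Qed.

Lemma stable_map_add {f g} :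
  stable_map f -> stable_map g -> stable_map (fun D => f D + g D).
Proof.
move=> [fP fS] [gP gS]; split=> [D PD|D D' PD PD'].
  exact: posdiag_add (fP _ PD) (gP _ PD).
apply: le_trans (dS_add (fP _ PD) (fP _ PD') (gP _ PD) (gP _ PD')) _.
by rewrite ge_max fS ?gS.
Qed.

End StableMaps.

Theorem mainTheorem6 (R : realType) (n : nat) (Lam Gam : 'M[R]_n)
    (f g : 'M[R]_n -> 'M[R]_n) :
  posdiag Lam -> posdiag Gam -> stable_map f -> stable_map g ->
  [/\ stable_map (fun D => Lam *m f (Gam *m D)),
      stable_map (fun D => invmx (f D)),
      stable_map (fun D => f (g D))
    & stable_map (fun D => f D + g D)].
Proof.
move=> PLam PGam fS gS; split.
- exact: stable_map_comp (stable_map_mull PLam)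
                         (stable_map_comp fS (stable_map_mull PGam)).
- exact: stable_map_comp stable_map_invmx fS.
- exact: stable_map_comp fS gS.
- exact: stable_map_add fS gS.
Qed.
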